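(* For every set $q$ of operations on a set $\Omega$, $\mathrm{Sim}(q)$ is a full monoid, i.e. it is closed under relational composition and converses, contains $\approx_{\mathrm{Sim}(q)}$, and is closed under subsimilarities.
   Context: A similarity on $\Omega$ is a relation $\pi\subseteq\Omega\times\Omega$ such that every $a$ has some $b$ with $a\pi b$ and every $b$ has some $a$ with $a\pi b$; $\bar a\,\pi\,\bar b$ means coordinatewise relatedness; for $R,S\subseteq\Omega^k$, $R\,\pi\,S$ means $\bar a\pi\bar b$ implies ($\bar a\in R\iff\bar b\in S$). A set of operations is a set of finitary relations and quantifiers (subsets of $\mathcal P(\Omega^{k_1})\times\cdots\times\mathcal P(\Omega^{k_l})$) on $\Omega$; $\mathscr L^-_{\infty\infty}(q)$ is the equality-free infinitary logic with predicate and Lindström quantifier symbols for members of $q$. $a\sim_q b$ iff for all formulas $\phi(x,\bar y)$ of $\mathscr L^-_{\infty\infty}(q)$ and tuples $\bar c$ from $\Omega$, $\phi(a,\bar c)\iff\phi(b,\bar c)$. A relation is invariant under a similarity or equivalence relation $\rho$ if $\bar a\rho\bar b$ implies $\bar a\in R\iff\bar b\in R$; a quantifier $Q$ is $\sim$-invariant under $\pi$ if for all $\bar R,\bar S$ of its type with every component invariant under $\sim$ and $R_i\,\pi\,S_i$: $\bar R\in Q\iff\bar S\in Q$. $\mathrm{Sim}(q)$ is the set of similarities under which every relation of $q$ is invariant and every quantifier of $q$ is $\sim_q$-invariant. For a set $\Pi$ of similarities, $a\approx_\Pi b$ iff for every finite $k$ and $\bar c\in\Omega^k$ there is $\pi\in\Pi$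 with $(a,\bar c)\,\pi\,(b,\bar c)$. A subsimilarity of $\pi$ is a similarity $\pi'\subseteq\pi$. *)

From Stdlib Require Import List.
From mathcomp Require Import all_boot.
Set Implicit Arguments. Unset Strict Implicit. Unset Printing Implicit Defensive.

Section Ops.
Variable Omega : Type.

Definition tup (k : nat) := 'I_k -> Omega.

(* the type P(Omega^k1) x ... x P(Omega^kl) of a quantifier of type ks = [k1;..;kl] *)
Definition qarg (ks : seq nat) := forall i : 'I_(size ks), tup (nth 0 ks i) -> Prop.

Record ops := Ops {
  rel_idx : Type;
  rel_ar  : rel_idx -> nat;
  rel_int : forall r : rel_idx, tup (rel_ar r) -> Prop;
  qf_idx  : Type;
  qf_ty   : qf_idx -> seq nat;
  qf_int  : forall Q : qf_idx, qarg (qf_ty Q) -> Prop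
}.

(* Syntax of equality-free L^-_{infty infty}(q) over a variable type V:
   atoms R(x1..xk), negation, arbitrary conjunctions, existential
   quantification over an arbitrary set W of variables, and Lindström
   quantifiers Q xbar_1 .. xbar_l (phi_1, .., phi_l) with xbar_i tuples of
   distinct variables. *)
Inductive form (q : ops) (V : Type) : Type :=
| FRel (r : rel_idx q) (args : 'I_(rel_ar r) -> V)
| FNeg (phi : form q V)
| FAnd (I : Type) (phis : I -> form q V)
| FEx (W : V -> Prop) (phi : form q V)
| FQ (Q : qf_idx q)
     (xs : forall i : 'I_(size (qf_ty Q)), 'I_(nth 0 (qf_ty Q) i) -> V)
     (xs_inj : forall i, injective (xs i))
     (phis : 'I_(size (qf_ty Q)) -> form q V).

Arguments FRel {q V} r args.
Arguments FNeg {q V} phi.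
Arguments FAnd {q V} I phis.
Arguments FEx {q V} W phi.
Arguments FQ {q V} Q xs xs_inj phis.

Fixpoint sat (q : ops) (V : Type) (phi : form q V) : (V -> Omega) -> Prop :=
  match phi with
  | FRel r args => fun s => @rel_int q r (fun j => s (args j))
  | FNeg phi => fun s => ~ sat phi s
  | FAnd J phis => fun s => forall i, sat (phis i) s
  | FEx W phi => fun s =>
      exists s' : V -> Omega, (forall v, ~ W v -> s' v = s v) /\ sat phi s'
  | FQ Q xs _ phis => fun s =>
      @qf_int q Q (fun i (a : tup (nth 0 (qf_ty Q) i)) =>
        exists s' : V -> Omega,
          (forall v, (forall j, xs i j <> v) -> s' v = s v) /\
          (forall j, s' (xs i j) = a j) /\ sat (phis i) s')
  end.

Fixpoint free (q : ops) (V : Type) (phi : form q V) : V -> Prop :=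
  match phi with
  | FRel r args => fun v => exists j, args j = v
  | FNeg phi => free phi
  | FAnd J phis => fun v => exists i, free (phis i) v
  | FEx W phi => fun v => free phi v /\ ~ W v
  | FQ Q xs _ phis => fun v => exists i, free (phis i) v /\ forall j, xs i j <> v
  end.

(* a ~_q b : for every formula phi(x, ybar) (free variables among x and the
   finitely many ybar) and every valuation of ybar (i.e. tuple cbar),
   phi(a, cbar) <-> phi(b, cbar). *)
Definition simq (q : ops) (a b : Omega) : Prop :=
  forall (V : Type) (phi : form q V) (x : V) (ys : list V),
    (forall v, free phi v -> v = x \/ List.In v ys) ->
    forall s s' : V -> Omega, s x = a -> s' x = b ->
      (forall v, v <> x -> s v = s' v) ->
      (sat phi s <-> sat phi s').

Definition similarity (pi : Omega -> Omega -> Prop) : Prop :=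
  (forall a, exists b, pi a b) /\ (forall b, exists a, pi a b).

Definition tuprel (pi : Omega -> Omega -> Prop) (k : nat) (a b : tup k) : Prop :=
  forall j, pi (a j) (b j).

Definition relrel (pi : Omega -> Omega -> Prop) (k : nat) (R S : tup k -> Prop) : Prop :=
  forall a b, tuprel pi a b -> (R a <-> S b).

Definition invariant (rho : Omega -> Omega -> Prop) (k : nat) (R : tup k -> Prop) : Prop :=
  relrel rho R R.

Definition qinvariant (sim pi : Omega -> Omega -> Prop) (ks : seq nat)
    (Q : qarg ks -> Prop) : Prop :=
  forall R S : qarg ks,
    (forall i, invariant sim (R i)) -> (forall i, invariant sim (S i)) ->
    (forall i, relrel pi (R i) (S i)) ->
    (Q R <-> Q S).

Definition Sim (q : ops) (pi : Omega -> Omega -> Prop) : Prop :=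
  similarity pi /\
  (forall r : rel_idx q, invariant pi (@rel_int q r)) /\
  (forall Q : qf_idx q, qinvariant (simq q) pi (@qf_int q Q)).

Definition approx (Pi : (Omega -> Omega -> Prop) -> Prop) (a b : Omega) : Prop :=
  forall (k : nat) (c : tup k), exists pi, Pi pi /\ pi a b /\ tuprel pi c c.

Definition rcomp (pi rho : Omega -> Omega -> Prop) (a c : Omega) : Prop :=
  exists b, pi a b /\ rho b c.

Definition rconv (pi : Omega -> Omega -> Prop) (a b : Omega) : Prop := pi b a.

Definition full_monoid (Pi : (Omega -> Omega -> Prop) -> Prop) : Prop :=
  (forall pi rho, Pi pi -> Pi rho -> Pi (rcomp pi rho)) /\
  (forall pi, Pi pi -> Pi (rconv pi)) /\
  Pi (approx Pi) /\
  (forall pi pi', Pi pi -> similarity pi' ->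
     (forall a b, pi' a b -> pi a b) -> Pi pi').

End Ops.

From Pilot Require Import Defs.
From mathcomp Require Import all_boot.
From Stdlib Require Import Classical ClassicalEpsilon FunctionalExtensionality PropExtensionality.

Set Implicit Arguments. Unset Strict Implicit. Unset Printing Implicit Defensive.

(* Defs.invariant is written qualified: eqtype also defines [invariant]. *)

(* The heart of the proof is a transfer principle for the infinitary logic
   L^-(q): satisfaction of a formula is unchanged when its valuation is
   replaced by a coordinatewise related one, whenever the relation respects
   the atoms and the quantifiers of q.  It is proved once, by induction on
   formulas, and instantiated twice: for the relation ~_q itself (so ~_q is a
   congruence for the whole logic), and then for every pi in Sim(q) (whose
   quantifier condition needs the definable relations to be ~_q-invariant,
   which the first instance provides).  A companion induction shows that
   satisfaction only depends on the free variables.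

   From these we get the key fact that a pi in Sim(q) reflects ~_q
   (pi a b, pi a' b' and b ~_q b' imply a ~_q a'), and that
   approx_{Sim(q)} is contained in ~_q. *)

Section FullMonoid.
Variable Omega : Type.
Variable q : ops Omega.

Lemma tup_image (pi : Omega -> Omega -> Prop) :
  (forall a, exists b, pi a b) -> forall k (a : tup Omega k), exists b, tuprel pi a b.
Proof. by move=> tot k a; apply: (choice (fun j b => pi (a j) b)) => j; apply: tot. Qed.

Lemma tup_preimage (pi : Omega -> Omega -> Prop) :
  (forall b, exists a, pi a b) -> forall k (b : tup Omega k), exists a, tuprel pi a b.
Proof. by move=> tot k b; apply: (@tup_image (rconv pi)). Qed.

Lemma qf_ext (Q : qf_idx q) (R S : qarg Omega (qf_ty Q)) :
  (forall i a, R i a <-> S i a) -> (qf_int R <-> qf_int S).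
Proof.
move=> RS; suff -> : R = S by [].
apply: functional_extensionality_dep => i; apply: functional_extensionality => a.
exact: propositional_extensionality.
Qed.

Definition upd (V : Type) n (xs : 'I_n -> V) (b : tup Omega n) (s : V -> Omega) (v : V) : Omega :=
  match excluded_middle_informative (exists j, xs j = v) with
  | left H => b (proj1_sig (constructive_indefinite_description _ H))
  | right _ => s v
  end.

Lemma upd_in V n (xs : 'I_n -> V) b s : injective xs -> forall j, upd xs b s (xs j) = b j.
Proof.
move=> xs_inj j; rewrite /upd; case: excluded_middle_informative => [H|[]]; last by exists j.
by destruct (constructive_indefinite_description _ H) as [j' E] => /=; rewrite (xs_inj _ _ E).
Qed.

Lemma upd_out V n (xs : 'I_n -> V) b s v : (forall j, xs j <> v) -> upd xs b s v = s v.
Proof.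
by move=> out; rewrite /upd; case: excluded_middle_informative => // -[j E]; case: (out j E).
Qed.

(* The relation on n-tuples defined by phi, reading the variables xs as the
   distinguished tuple and s as the parameters; the argument of a Lindström
   quantifier (the satisfaction clause of FQ unfolds to it). *)
Definition defrel (V : Type) (phi : form q V) n (xs : 'I_n -> V) (s : V -> Omega)
    (a : tup Omega n) : Prop :=
  exists s', (forall v, (forall j, xs j <> v) -> s' v = s v) /\
             (forall j, s' (xs j) = a j) /\ sat phi s'.

Lemma defrel_transfer V (phi : form q V) n (xs : 'I_n -> V) (rel : V -> Omega -> Omega -> Prop)
    s s' a b :
  injective xs ->
  (forall t t', (forall v, rel v (t v) (t' v)) -> sat phi t -> sat phi t') ->
  (forall v, (forall j, xs j <> v) -> rel v (s v) (s' v)) ->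
  (forall j, rel (xs j) (a j) (b j)) -> defrel phi xs s a -> defrel phi xs s' b.
Proof.
move=> xs_inj transfer rel_out rel_in [s1 [s1_out [s1_in sat1]]].
exists (upd xs b s'); split; first exact: upd_out.
split; first exact: upd_in.
apply: (transfer s1) sat1 => v.
have [[j <-]|not_xs] := classic (exists j, xs j = v).
  by rewrite s1_in upd_in.
have out : forall j, xs j <> v by move=> j E; apply: not_xs; exists j.
by rewrite s1_out // upd_out //; apply: rel_out.
Qed.

Lemma ex_transfer V (W : V -> Prop) (phi : form q V) (rel : V -> Omega -> Omega -> Prop) s s' :
  (forall t t', (forall v, rel v (t v) (t' v)) -> sat phi t -> sat phi t') ->
  (forall v a, exists b, rel v a b) ->
  (forall v, ~ W v -> rel v (s v) (s' v)) ->
  sat (FEx W phi) s -> sat (FEx W phi) s'.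
Proof.
move=> transfer tot rel_out [s1 [s1_out sat1]].
have [f relf] := choice (fun va b => rel va.1 va.2 b) (fun va => tot va.1 va.2).
pose t v := if excluded_middle_informative (W v) then f (v, s1 v) else s' v.
exists t; split=> [v Wv|]; first by rewrite /t; case: excluded_middle_informative.
apply: (transfer s1) sat1 => v; rewrite /t.
case: (excluded_middle_informative (W v)) => Wv; first exact: (relf (v, s1 v)).
by rewrite s1_out //; apply: rel_out.
Qed.

Lemma defrel_relrel V (phi : form q V) n (xs : 'I_n -> V) (pi : Omega -> Omega -> Prop) s s' :
  injective xs ->
  (forall t t', (forall v, pi (t v) (t' v)) -> (sat phi t <-> sat phi t')) ->
  (forall v, pi (s v) (s' v)) -> relrel pi (defrel phi xs s) (defrel phi xs s').
Proof.
move=> xs_inj pres spi a b ab; split.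
  by apply: (@defrel_transfer _ _ _ _ (fun _ => pi)) => // t t' /pres ->.
apply: (@defrel_transfer _ _ _ _ (fun _ x y => pi y x)) => // t t' tt'.
by rewrite (pres t' t tt').
Qed.

Section Transfer.
Variable pi : Omega -> Omega -> Prop.
Hypothesis pi_sim : similarity pi.
Hypothesis pi_rel : forall r : rel_idx q, Defs.invariant pi (@rel_int _ q r).
Variable good : forall n, (tup Omega n -> Prop) -> Prop.
Hypothesis good_defrel : forall V (phi : form q V) n (xs : 'I_n -> V) s,
  injective xs -> good (defrel phi xs s).
Hypothesis pi_qf : forall (Q : qf_idx q) (R S : qarg Omega (qf_ty Q)),
  (forall i, good (R i)) -> (forall i, good (S i)) ->
  (forall i, relrel pi (R i) (S i)) -> (qf_int R <-> qf_int S).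

Lemma sat_transfer V (phi : form q V) :
  forall s s', (forall v, pi (s v) (s' v)) -> (sat phi s <-> sat phi s').
Proof.
case: pi_sim => pi_l pi_r.
elim: phi => [r args|phi IH|I phis IH|W phi IH|Q xs xs_inj phis IH] s s' ss'.
- by apply: pi_rel => j; apply: ss'.
- by rewrite /= (IH s s' ss').
- by split=> /= H i; move: (H i); rewrite (IH i s s').
- split.
    apply: (ex_transfer (rel := fun _ => pi)) => [t t' /IH -> //|v|v _].
    + exact: pi_l.
    + exact: ss'.
  apply: (ex_transfer (rel := fun _ x y => pi y x)) => [t t' /IH <- //|v|v _].
  + exact: pi_r.
  + exact: ss'.
- change (qf_int (fun i => defrel (phis i) (xs i) s) <->
          qf_int (fun i => defrel (phis i) (xs i) s')).
  apply: pi_qf => i; [exact: good_defrel | exact: good_defrel |].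
  exact: defrel_relrel (xs_inj i) (IH i) ss'.
Qed.

End Transfer.

Lemma sat_free V (phi : form q V) :
  forall s s', (forall v, free phi v -> s v = s' v) -> (sat phi s <-> sat phi s').
Proof.
elim: phi => [r args|phi IH|I phis IH|W phi IH|Q xs xs_inj phis IH] s s' ss' /=.
- suff -> : (fun j => s (args j)) = (fun j => s' (args j)) by [].
  by apply: functional_extensionality => j; apply: ss'; exists j.
- by rewrite (IH s s' ss').
- by split=> H i; move: (H i); rewrite (IH i s s') // => v fv; apply: ss'; exists i.
- split.
    apply: (@ex_transfer _ _ _ (fun v x y => free phi v -> x = y))
      => [t t' tt'|v a|v Wv fv]; [by rewrite (IH t t') | by exists a | exact: ss'].
  apply: (@ex_transfer _ _ _ (fun v x y => free phi v -> y = x))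
    => [t t' tt'|v a|v Wv fv]; [by rewrite (IH t' t) | by exists a | by rewrite ss'].
- apply: qf_ext => i a; split.
    apply: (@defrel_transfer _ _ _ _ (fun v x y => free (phis i) v -> x = y)) => //.
    + by move=> t t' tt'; rewrite (IH i t t').
    + by move=> v out fv; apply: ss'; exists i.
  apply: (@defrel_transfer _ _ _ _ (fun v x y => free (phis i) v -> y = x)) => //.
  + by move=> t t' tt'; rewrite (IH i t' t).
  + by move=> v out fv; rewrite ss' //; exists i.
Qed.

Lemma simq_refl a : simq q a a.
Proof.
move=> V phi x ys _ s s' sx s'x ss'.
suff -> : s = s' by [].
apply: functional_extensionality => v.
by have [->|vx] := classic (v = x); [rewrite sx s'x | apply: ss'].
Qed.

Lemma simq_sym a b : simq q a b -> simq q b a.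
Proof.
move=> ab V phi x ys fr s s' sx s'x ss'; symmetry.
by apply: (ab V phi x ys fr s' s) => // v /ss'.
Qed.

Definition tset k (a : tup Omega k) (j : 'I_k) (b0 : Omega) : tup Omega k :=
  fun l => if l == j then b0 else a l.

Lemma coordinatewise_invariant k (R : tup Omega k -> Prop) (E : Omega -> Omega -> Prop) :
  (forall a j b0, E (a j) b0 -> (R a <-> R (tset a j b0))) ->
  forall a b, tuprel E a b -> (R a <-> R b).
Proof.
move=> step a b ab.
pose mix m (l : 'I_k) := if (l < m)%N then b l else a l.
have mixk : mix k = b by apply: functional_extensionality => l; rewrite /mix ltn_ord.
suff mix_ok m : R a <-> R (mix m) by rewrite -mixk.
elim: m => [|m IH].
  by have -> : mix 0 = a by apply: functional_extensionality.
case: (ltnP m k) => [mk|km].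
  have -> : mix m.+1 = tset (mix m) (Ordinal mk) (b (Ordinal mk)).
    apply: functional_extensionality => l; rewrite /mix /tset ltnS leq_eqVlt.
    case: (l =P Ordinal mk) => [->|neq]; first by rewrite eqxx.
    by have /negbTE -> : val l != m by apply/eqP => lm; apply/neq/val_inj.
  by rewrite IH; apply: step; rewrite /mix ltnn.
have -> // : mix m.+1 = mix m.
apply: functional_extensionality => l; rewrite /mix.
have lm : (l < m)%N by apply: leq_trans (ltn_ord l) km.
by rewrite lm (leqW lm).
Qed.

Lemma In_of_mem (T : eqType) (x : T) (s : seq T) : x \in s -> List.In x s.
Proof. by elim: s => //= y s IH; rewrite in_cons => /orP [/eqP ->|/IH]; [left|right]. Qed.

(* Atomic relations are ~_q-invariant: change one argument using the atomic
   formula r(x_1, ..., x_k). *)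
Lemma rel_simq (r : rel_idx q) : Defs.invariant (simq q) (@rel_int _ q r).
Proof.
apply: coordinatewise_invariant => a j b0 ab0.
apply: (ab0 _ (@FRel _ q _ r id) j (enum 'I_(rel_ar r)) _ a (tset a j b0)) => //.
- by move=> v _; right; apply: In_of_mem; rewrite mem_enum.
- by rewrite /tset eqxx.
- by move=> v; rewrite /tset; case: eqP.
Qed.

Lemma sat_simq V (phi : form q V) s s' :
  (forall v, simq q (s v) (s' v)) -> (sat phi s <-> sat phi s').
Proof.
apply: (@sat_transfer _ _ _ (fun _ _ => True)) => //.
- by split=> a; exists a; apply: simq_refl.
- exact: rel_simq.
- move=> Q R S _ _ RS; apply: qf_ext => i a.
  by apply: RS => j; apply: simq_refl.
Qed.

(* Hence every definable relation is ~_q-invariant, the side condition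
   needed to apply the transfer principle to members of Sim(q). *)
Lemma defrel_simq_invariant V (phi : form q V) n (xs : 'I_n -> V) s :
  injective xs -> Defs.invariant (simq q) (defrel phi xs s).
Proof.
move=> xs_inj; apply: defrel_relrel => // [t t'|v]; [exact: sat_simq | exact: simq_refl].
Qed.

Lemma sat_Sim (pi : Omega -> Omega -> Prop) V (phi : form q V) s s' :
  Sim q pi -> (forall v, pi (s v) (s' v)) -> (sat phi s <-> sat phi s').
Proof.
case=> pi_sim [pi_rel pi_qf].
exact: (sat_transfer pi_sim pi_rel (@defrel_simq_invariant) pi_qf).
Qed.

(* Members of Sim(q) reflect ~_q: if a pi b, a' pi b' and b ~_q b', then
   a ~_q a'.  Move the valuation along pi, which fixes truth, change b to b'. *)
Lemma Sim_reflects_simq pi a b a' b' :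
  Sim q pi -> pi a b -> pi a' b' -> simq q b b' -> simq q a a'.
Proof.
move=> Spi ab a'b' bb' V phi x ys _ s s' sx s'x ss'.
have [f pif] := choice pi (proj1 (proj1 Spi)).
pose t c v := if excluded_middle_informative (v = x) then c else f (s v).
have pi_t c d : pi d c -> forall s1, s1 x = d -> (forall v, v <> x -> s1 v = s v) ->
    forall v, pi (s1 v) (t c v).
  move=> dc s1 s1x s1s v; rewrite /t.
  case: (excluded_middle_informative (v = x)) => [vx|vx] /=; first by rewrite vx s1x.
  by rewrite s1s.
rewrite (sat_Sim phi Spi (pi_t b a ab s sx (fun _ _ => erefl))).
rewrite (sat_Sim phi Spi (pi_t b' a' a'b' s' s'x (fun v vx => esym (ss' v vx)))).
apply: sat_simq => v; rewrite /t.
by case: (excluded_middle_informative (v = x)) => ? /=; [exact: bb' | exact: simq_refl].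
Qed.

Lemma Sim_reflects_simq_tup pi k (a b a' b' : tup Omega k) :
  Sim q pi -> tuprel pi a b -> tuprel pi a' b' -> tuprel (simq q) b b' ->
  tuprel (simq q) a a'.
Proof. by move=> Spi ab a'b' bb' j; apply: Sim_reflects_simq Spi (ab j) (a'b' j) (bb' j). Qed.

Lemma Sim_preimages_agree pi k (R : tup Omega k -> Prop) a a' b :
  Sim q pi -> Defs.invariant (simq q) R -> tuprel pi a b -> tuprel pi a' b -> (R a <-> R a').
Proof.
move=> Spi Rinv ab a'b; apply: Rinv.
by apply: (Sim_reflects_simq_tup Spi ab a'b) => j; apply: simq_refl.
Qed.

Lemma Sim_eq : Sim q eq.
Proof.
split; first by split=> a; exists a.
split=> [r a b ab|Q R S _ _ RS].
  by have -> : a = b by apply: functional_extensionality.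
by apply: qf_ext => i a; apply: RS.
Qed.

Lemma approx_refl a : approx (Sim q) a a.
Proof. by move=> k c; exists eq; split; [exact: Sim_eq|]. Qed.

(* approx_{Sim(q)} is contained in ~_q: realise the finitely many
   parameters ys by a tuple, move along a pi fixing it, and use that only
   the free variables matter. *)
Lemma approx_simq a b : approx (Sim q) a b -> simq q a b.
Proof.
move=> ab V phi x ys fr s s' sx s'x ss'.
have [pi [Spi [piab pic]]] := ab (length ys) (fun j => s (List.nth j ys x)).
have [f pif] := choice pi (proj1 (proj1 Spi)).
pose t v := if excluded_middle_informative (v = x) then b
  else if excluded_middle_informative (List.In v ys) then s v else f (s v).
transitivity (sat phi t).
  apply: (sat_Sim _ Spi) => v; rewrite /t.
  case: (excluded_middle_informative (v = x)) => [vx|vx] /=; first by rewrite vx sx.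
  case: (excluded_middle_informative (List.In v ys)) => [vys|nys] /=; last exact: pif.
  have [n [/ltP nlen <-]] := List.In_nth _ _ x vys.
  exact: (pic (Ordinal nlen)).
apply: sat_free => v /fr fv; rewrite /t.
case: (excluded_middle_informative (v = x)) => [vx|vx] /=; first by rewrite vx s'x.
case: (excluded_middle_informative (List.In v ys)) => [vys|nys] /=; first exact: ss'.
by case: fv.
Qed.

Definition pimage (pi : Omega -> Omega -> Prop) k (R : tup Omega k -> Prop) (b : tup Omega k) :=
  exists a, tuprel pi a b /\ R a.

(* For pi in Sim(q), the image of a ~_q-invariant relation is ~_q-invariant
   and pi-related to it; it is the middle argument for a composite. *)
Lemma pimage_invariant pi k (R : tup Omega k -> Prop) :
  Sim q pi -> Defs.invariant (simq q) R -> Defs.invariant (simq q) (pimage pi R).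
Proof.
move=> Spi Rinv.
suff imp b b' : tuprel (simq q) b b' -> pimage pi R b -> pimage pi R b'.
  by move=> b b' bb'; split; apply: imp => // j; apply: simq_sym.
move=> bb' [a [ab Ra]].
have [a' a'b'] := tup_preimage (proj2 (proj1 Spi)) b'.
have aa' : tuprel (simq q) a a' := Sim_reflects_simq_tup Spi ab a'b' bb'.
by exists a'; split=> //; rewrite -(Rinv a a' aa').
Qed.

Lemma relrel_pimage pi k (R : tup Omega k -> Prop) :
  Sim q pi -> Defs.invariant (simq q) R -> relrel pi R (pimage pi R).
Proof.
move=> Spi Rinv a b ab; split=> [Ra|[a' [a'b Ra']]]; first by exists a.
by rewrite (Sim_preimages_agree Spi Rinv ab a'b).
Qed.

Lemma relrel_pimage_comp pi rho k (R S : tup Omega k -> Prop) :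
  similarity pi -> relrel (rcomp pi rho) R S -> relrel rho (pimage pi R) S.
Proof.
move=> [_ pi_r] RS b c bc; split=> [[a [ab Ra]]|Sc].
  by rewrite -(RS a c) // => j; exists (b j).
have [a ab] := tup_preimage pi_r b.
by exists a; split=> //; rewrite (RS a c) // => j; exists (b j).
Qed.

Lemma similarity_comp (pi rho : Omega -> Omega -> Prop) :
  similarity pi -> similarity rho -> similarity (rcomp pi rho).
Proof.
move=> [pi_l pi_r] [rho_l rho_r]; split=> [a|c].
  by have [b ab] := pi_l a; have [c bc] := rho_l b; exists c, b.
by have [b bc] := rho_r c; have [a ab] := pi_r b; exists a, b.
Qed.

Lemma Sim_comp pi rho : Sim q pi -> Sim q rho -> Sim q (rcomp pi rho).
Proof.
move=> Spi Srho; have [pi_sim [pi_rel pi_qf]] := Spi; have [rho_sim [rho_rel rho_qf]] := Srho.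
split; first exact: similarity_comp.
split=> [r a c ac|Q R S Rinv Sinv RS].
  have [b abc] := choice (fun j b => pi (a j) b /\ rho b (c j)) ac.
  rewrite (pi_rel r a b) => [|j]; last by case: (abc j).
  by apply: rho_rel => j; case: (abc j).
have Tinv i := pimage_invariant Spi (Rinv i).
rewrite (pi_qf Q R (fun i => pimage pi (R i)) Rinv Tinv) => [|i]; last first.
  exact: relrel_pimage Spi (Rinv i).
by apply: rho_qf Tinv Sinv _ => i; apply: relrel_pimage_comp.
Qed.

Lemma Sim_conv pi : Sim q pi -> Sim q (rconv pi).
Proof.
move=> [[pi_l pi_r] [pi_rel pi_qf]]; split; first by split=> a; [apply: pi_r | apply: pi_l].
split=> [r a b ab|Q R S Rinv Sinv RS]; first by rewrite (pi_rel r b a).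
by rewrite (pi_qf Q S R Sinv Rinv) // => i b a ba; rewrite (RS i a b).
Qed.

Lemma Sim_approx : Sim q (approx (Sim q)).
Proof.
split; first by split=> a; exists a; apply: approx_refl.
split=> [r a b ab|Q R S _ _ RS].
  by apply: rel_simq => j; apply: approx_simq.
by apply: qf_ext => i a; apply: RS => j; apply: approx_refl.
Qed.

Lemma Sim_sub pi pi' :
  Sim q pi -> similarity pi' -> (forall a b, pi' a b -> pi a b) -> Sim q pi'.
Proof.
move=> Spi pi'_sim sub; have [_ [pi_rel pi_qf]] := Spi.
split=> //; split=> [r a b ab|Q R S Rinv Sinv RS].
  by apply: pi_rel => j; apply: sub.
apply: (pi_qf Q R S Rinv Sinv) => i a b ab.
have [a' a'b] := tup_preimage (proj2 pi'_sim) b.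
rewrite (Sim_preimages_agree Spi (Rinv i) ab (fun j => sub _ _ (a'b j))).
exact: RS.
Qed.

End FullMonoid.

Theorem lemma16 (Omega : Type) (q : ops Omega) : full_monoid (Sim q).
Proof.
split; first exact: Sim_comp.
split; first exact: Sim_conv.
split; first exact: Sim_approx.
exact: Sim_sub.
Qed.
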